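(* Let $R_1,\dots,R_k$ be norms on $\mathbb{R}^p$, $\theta_1^*,\dots,\theta_k^*\in\mathbb{R}^p$, and $\mathcal{C}_i=\operatorname{cone}\{\Delta\in\mathbb{R}^p: R_i(\theta_i^*+\Delta)\le R_i(\theta_i^* )\}$. For $i=1,\dots,k$ define $$\delta_i=\sup\Big\{\langle u,v\rangle:\ u\in(-\mathcal{C}_i)\cap S^{p-1},\ v\in\Big(\sum_{j\ne i}\mathcal{C}_j\Big)\cap S^{p-1}\Big\},$$ and $\delta=\max_i\delta_i$. If $\delta<1$, then there exists $\rho>0$ such that for all $\Delta_i\in\mathcal{C}_i$, $i=1,\dots,k$, $$\Big\|\sum_{i=1}^k\Delta_i\Big\|_2\ \ge\ \rho\sum_{i=1}^k\|\Delta_i\|_2 .$$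
   Context: $\operatorname{cone}(E)$ is the smallest closed cone containing $E$; $S^{p-1}$ is the Euclidean unit sphere in $\mathbb{R}^p$; $\sum_{j\ne i}\mathcal{C}_j$ is the Minkowski sum of the cones. *)

From HB Require Import structures.
From mathcomp Require Import all_boot all_order all_algebra.
From mathcomp Require Import all_classical all_reals all_analysis.
Set Implicit Arguments. Unset Strict Implicit. Unset Printing Implicit Defensive.
Import Order.TTheory GRing.Theory Num.Theory.
Import numFieldNormedType.Exports.
Local Open Scope classical_set_scope.
Local Open Scope ring_scope.

Definition inner (R : realType) (p : nat) (u v : 'rV[R]_p) : R :=
  \sum_(j < p) u ord0 j * v ord0 j.

Definition enorm (R : realType) (p : nat) (u : 'rV[R]_p) : R :=
  Num.sqrt (inner u u).

Definition sphere (R : realType) (p : nat) : set 'rV[R]_p :=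
  [set u | enorm u = 1].

Definition is_norm (R : realType) (p : nat) (N : 'rV[R]_p -> R) : Prop :=
  [/\ forall x, 0 <= N x,
      forall x, N x = 0 -> x = 0,
      forall (a : R) x, N (a *: x) = `|a| * N x &
      forall x y, N (x + y) <= N x + N y].

Definition is_cone (R : realType) (p : nat) (C : set 'rV[R]_p) : Prop :=
  forall (t : R) x, 0 <= t -> C x -> C (t *: x).

Definition cone_of (R : realType) (p : nat) (E : set 'rV[R]_p) : set 'rV[R]_p :=
  \bigcap_(C in [set C : set 'rV[R]_p | [/\ closed C, is_cone C & E `<=` C]]) C.

Definition tangent_cone (R : realType) (p : nat) (N : 'rV[R]_p -> R)
  (theta : 'rV[R]_p) : set 'rV[R]_p :=
  cone_of [set D | N (theta + D) <= N theta].

Definition minkowski_sum_but (R : realType) (p k : nat)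
  (C : 'I_k -> set 'rV[R]_p) (i : 'I_k) : set 'rV[R]_p :=
  [set x | exists D : 'I_k -> 'rV[R]_p,
     (forall j, j != i -> C j (D j)) /\ x = \sum_(j < k | j != i) D j].

(* delta_i, as an extended real supremum (sup of empty set = -oo) *)
Definition delta_i (R : realType) (p k : nat)
  (C : 'I_k -> set 'rV[R]_p) (i : 'I_k) : \bar R :=
  ereal_sup [set x : \bar R | exists u v : 'rV[R]_p,
     [/\ C i (- u), sphere u, minkowski_sum_but C i v, sphere v
        & x = (inner u v)%:E]].

Definition delta (R : realType) (p k : nat) (C : 'I_k -> set 'rV[R]_p) : \bar R :=
  \big[Order.max/-oo%E]_(i < k) delta_i C i.

From HB Require Import structures.
From mathcomp Require Import all_boot all_order all_algebra.
From mathcomp Require Import all_classical all_reals all_analysis.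
From mathcomp Require Import ring lra.
Import Order.TTheory GRing.Theory Num.Theory.
Set Implicit Arguments.
Unset Strict Implicit.
Unset Printing Implicit Defensive.
Local Open Scope classical_set_scope.
Local Open Scope ring_scope.

(* Let c = max(0, delta) < 1.  Fix i and write w for the sum of the other
   Delta_j.  Normalising Delta_i and w puts -Delta_i/|Delta_i| in -C_i and
   w/|w| in the Minkowski sum of the other cones, so
   <Delta_i, w> >= -c |Delta_i| |w|, and expanding |Delta_i + w|^2 gives
   |sum_j Delta_j| >= (1 - c) |Delta_i|.  Summing over i yields the claim with
   rho = (1 - c)/(k + 1), where k + 1 keeps rho positive when k = 0. *)

Section EuclideanRow.
Variables (R : realType) (p : nat).
Implicit Types (x y z : 'rV[R]_p) (a : R).

Lemma innerC x y : inner x y = inner y x.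
Proof. by apply: eq_bigr => j _; rewrite mulrC. Qed.

Lemma innerDl x y z : inner (x + y) z = inner x z + inner y z.
Proof. by rewrite /inner -big_split; apply: eq_bigr => j _; rewrite !mxE mulrDl. Qed.

Lemma innerDr x y z : inner x (y + z) = inner x y + inner x z.
Proof. by rewrite innerC innerDl !(innerC x). Qed.

Lemma innerZl a x y : inner (a *: x) y = a * inner x y.
Proof. by rewrite /inner mulr_sumr; apply: eq_bigr => j _; rewrite !mxE mulrA. Qed.

Lemma innerZr a x y : inner x (a *: y) = a * inner x y.
Proof. by rewrite innerC innerZl innerC. Qed.

Lemma innerNl x y : inner (- x) y = - inner x y.
Proof. by rewrite -scaleN1r innerZl mulN1r. Qed.

Lemma inner0l x : inner 0 x = 0.
Proof. by rewrite /inner big1 // => j _; rewrite mxE mul0r. Qed.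

Lemma inner_ge0 x : 0 <= inner x x.
Proof. by apply: sumr_ge0 => j _; rewrite -expr2 sqr_ge0. Qed.

Lemma inner_eq0 x : (inner x x == 0) = (x == 0).
Proof.
rewrite psumr_eq0; last by move=> j _; rewrite -expr2 sqr_ge0.
apply/allP/eqP => [x0|-> j _]; last by rewrite /= mxE mulr0.
apply/rowP => j; rewrite mxE.
by have /= := x0 j (mem_index_enum j); rewrite mulf_eq0 orbb => /eqP.
Qed.

Lemma enorm_ge0 x : 0 <= enorm x.
Proof. exact: sqrtr_ge0. Qed.

Lemma enorm0 : enorm (0 : 'rV[R]_p) = 0.
Proof. by rewrite /enorm inner0l sqrtr0. Qed.

Lemma enorm_sqr x : enorm x ^+ 2 = inner x x.
Proof. by rewrite /enorm sqr_sqrtr // inner_ge0. Qed.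

Lemma enorm_eq0 x : (enorm x == 0) = (x == 0).
Proof. by rewrite -sqrf_eq0 enorm_sqr inner_eq0. Qed.

Lemma enormZ a x : enorm (a *: x) = `|a| * enorm x.
Proof. by rewrite /enorm innerZl innerZr mulrA -expr2 sqrtrM ?sqr_ge0 // sqrtr_sqr. Qed.

Lemma enormN x : enorm (- x) = enorm x.
Proof. by rewrite -scaleN1r enormZ normrN1 mul1r. Qed.

Lemma sphere_normalize x : x != 0 -> sphere ((enorm x)^-1 *: x).
Proof.
rewrite -enorm_eq0 => x0; rewrite /sphere /= enormZ.
by rewrite ger0_norm ?invr_ge0 ?enorm_ge0 // mulVf.
Qed.

Lemma enorm_sqrD x y :
  enorm (x + y) ^+ 2 = enorm x ^+ 2 + 2 * inner x y + enorm y ^+ 2.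
Proof. by rewrite !enorm_sqr innerDl !innerDr (innerC y x); ring. Qed.

End EuclideanRow.

Lemma sqr_ge_angle_bound (R : realFieldType) (c a b t : R) :
  0 <= c <= 1 -> 0 <= a -> 0 <= b -> - (c * a * b) <= t ->
  ((1 - c) * a) ^+ 2 <= a ^+ 2 + 2 * t + b ^+ 2.
Proof.
move=> /andP[c0 c1] a0 b0 tge.
have q1 : 0 <= c * (a - b) ^+ 2 by rewrite mulr_ge0 ?sqr_ge0.
have q2 : 0 <= (1 - c) * b ^+ 2 by rewrite mulr_ge0 ?sqr_ge0 ?subr_ge0.
have q3 : 0 <= c * (1 - c) * a ^+ 2 by rewrite !mulr_ge0 ?sqr_ge0 ?subr_ge0.
have e : a ^+ 2 + 2 * (- (c * a * b)) + b ^+ 2 - ((1 - c) * a) ^+ 2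
   = c * (a - b) ^+ 2 + (1 - c) * b ^+ 2 + c * (1 - c) * a ^+ 2 by ring.
lra.
Qed.

Lemma enorm_addr_ge (R : realType) (p : nat) (c : R) (x y : 'rV[R]_p) :
  0 <= c <= 1 -> - (c * enorm x * enorm y) <= inner x y ->
  (1 - c) * enorm x <= enorm (x + y).
Proof.
move=> c01 xy; have c1 : c <= 1 by case/andP: c01.
rewrite -(ler_pXn2r (_ : (0 < 2)%N)) ?nnegrE ?enorm_ge0 ?mulr_ge0 ?enorm_ge0 ?subr_ge0 //.
by rewrite enorm_sqrD sqr_ge_angle_bound ?enorm_ge0.
Qed.

Lemma ereal_lt1_le_fin (R : realDomainType) (x : \bar R) :
  (x < 1%:E)%E -> exists2 c : R, 0 <= c < 1 & (x <= c%:E)%E.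
Proof.
case: x => [r| |] //= r1.
- exists (Num.max 0 r); last by rewrite lee_fin le_max lexx orbT.
  by rewrite le_max lexx gt_max ltr01 -lte_fin r1.
- by exists 0; rewrite ?lexx ?ltr01 ?leNye.
Qed.

Section Cones.
Variables (R : realType) (p : nat).

Lemma cone_of_is_cone (E : set 'rV[R]_p) : is_cone (cone_of E).
Proof. by move=> t x t0 Ex C /[dup] /Ex Cx [_ coneC _]; apply: coneC. Qed.

Lemma tangent_cone_is_cone (N : 'rV[R]_p -> R) (theta : 'rV[R]_p) :
  is_cone (tangent_cone N theta).
Proof. exact: cone_of_is_cone. Qed.

Variables (k : nat) (C : 'I_k -> set 'rV[R]_p).

Lemma minkowski_sum_but_sum (i : 'I_k) (D : 'I_k -> 'rV[R]_p) :
  (forall j, j != i -> C j (D j)) ->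
  minkowski_sum_but C i (\sum_(j < k | j != i) D j).
Proof. by move=> CD; exists D. Qed.

Lemma minkowski_sum_but_is_cone (i : 'I_k) :
  (forall j, is_cone (C j)) -> is_cone (minkowski_sum_but C i).
Proof.
move=> coneC t x t0 [D [CD ->]]; rewrite scaler_sumr.
by apply: minkowski_sum_but_sum => j ji; apply: coneC t0 (CD j ji).
Qed.

Lemma inner_le_delta (i : 'I_k) (u v : 'rV[R]_p) :
  C i (- u) -> sphere u -> minkowski_sum_but C i v -> sphere v ->
  ((inner u v)%:E <= delta C)%E.
Proof.
move=> Cu Su Cv Sv; apply: le_trans (le_bigmax _ _ i).
by apply: ereal_sup_ubound; exists u, v.
Qed.

Lemma inner_ge_delta (c : R) (i : 'I_k) (x y : 'rV[R]_p) :
  (forall j, is_cone (C j)) -> (delta C <= c%:E)%E ->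
  C i x -> minkowski_sum_but C i y ->
  - (c * enorm x * enorm y) <= inner x y.
Proof.
move=> coneC dc Cx Cy.
have [->|x0] := eqVneq x 0; first by rewrite inner0l enorm0 mulr0 mul0r oppr0.
have [->|y0] := eqVneq y 0; first by rewrite innerC inner0l enorm0 mulr0 oppr0.
set a := enorm x; set b := enorm y.
have ap : 0 < a by rewrite lt_def enorm_eq0 x0 enorm_ge0.
have bp : 0 < b by rewrite lt_def enorm_eq0 y0 enorm_ge0.
have Cu : C i (- - (a^-1 *: x)) by rewrite opprK; apply: coneC; rewrite ?invr_ge0 ?ltW.
have Su : sphere (- (a^-1 *: x)) by rewrite /sphere /= enormN sphere_normalize.
have Cv : minkowski_sum_but C i (b^-1 *: y).
  by apply: minkowski_sum_but_is_cone; rewrite ?invr_ge0 ?ltW.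
have := le_trans (inner_le_delta Cu Su Cv (sphere_normalize y0)) dc.
rewrite lee_fin innerNl innerZl innerZr mulrA -invfM lerNl -ler_pdivrMl ?invr_gt0 ?mulr_gt0 //.
by rewrite invrK mulrN mulrC mulrA.
Qed.

End Cones.

Theorem theorem2 (R : realType) (p k : nat)
  (N : 'I_k -> 'rV[R]_p -> R) (theta : 'I_k -> 'rV[R]_p) :
  (forall i, is_norm (N i)) ->
  (delta (fun i => tangent_cone (N i) (theta i)) < 1%:E)%E ->
  exists rho : R, 0 < rho /\
    forall Delta : 'I_k -> 'rV[R]_p,
      (forall i, tangent_cone (N i) (theta i) (Delta i)) ->
      enorm (\sum_(i < k) Delta i) >= rho * \sum_(i < k) enorm (Delta i).
Proof.
move=> _ /ereal_lt1_le_fin[c /andP[c0 c1] dc].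
have coneC i : is_cone (tangent_cone (N i) (theta i)) by apply: tangent_cone_is_cone.
exists ((1 - c) / k.+1%:R); split; first by rewrite divr_gt0 ?subr_gt0 ?ltr0n.
move=> Delta CDelta; set s := \sum_(i < k) Delta i.
have Delta_le i : (1 - c) * enorm (Delta i) <= enorm s.
  rewrite /s (bigD1 i) //=; apply: enorm_addr_ge; first by rewrite c0 ltW.
  exact: inner_ge_delta coneC dc (CDelta i) (minkowski_sum_but_sum (fun j _ => CDelta j)).
have sum_le : (1 - c) * \sum_(i < k) enorm (Delta i) <= \sum_(i < k) enorm s.
  by rewrite mulr_sumr; apply: ler_sum.
rewrite sumr_const card_ord -mulr_natr in sum_le.
rewrite mulrAC ler_pdivrMr ?ltr0n //; apply: le_trans sum_le _.
by rewrite ler_wpM2l ?enorm_ge0 ?ler_nat.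
Qed.
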